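(* Let $(X,b,m)$ be a connected weighted graph satisfying conditions (B) and (M), and let $D\subset X$ be non-empty. Then there exists a Voronoi decomposition of $X$ with centers from $D$. Moreover, whenever $R=\mathrm{Covr}(D)$ is finite, every Voronoi decomposition $(V_p)_{p\in D}$ of $X$ with centers from $D$ satisfies $V_p\subset B_R(p)$ for all $p\in D$.
   Context: A weighted graph $(X,b,m)$: $X$ countable, $b:X\times X\to[0,\infty)$ symmetric with $b(x,x)=0$ and $\sum_y b(x,y)<\infty$, $m:X\to(0,\infty)$. Condition (B): $\sup_x\frac{1}{m(x)}\sum_y b(x,y)<\infty$. Condition (M): $\sup_x m(x)<\infty$. A path from $x_0$ to $x_k$ is $\gamma=(x_0,\dots,x_k)$ with $b(x_j,x_{j+1})>0$, of length $L(\gamma)=\sum_{j=0}^{k-1}1/b(x_j,x_{j+1})$ (trivial paths have length $0$); it lies in a set $V$ if all $x_j\in V$. Connected means any two points are joined by a path; $d(x,y)$ is the infimum of lengths of paths from $x$ to $y$; $B_r(x):=\{y:d(x,y)\le r\}$. $\mathrm{Covr}(D):=\inf\{R>0:\bigcup_{p\in D}B_R(p)=X\}\in[0,\infty]$. A Voronoi decomposition of $X$ with centers from $D$ is a pairwise disjoint family $(V_p)_{p\in D}$ of subsets of $X$ such that: (V1) for each $p\in D$, $p\in V_p$, and for every $x\in V_p$ there is a path from $p$ to $x$ lying in $V_p$ with length $d(p,x)$; (V2) for each $p\in D$ and $x\in V_p$, $d(p,x)\le d(q,x)$ for all $q\in D$; (V3) $\bigcup_{p\in D}V_p=X$. *)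

From HB Require Import structures.
From mathcomp Require Import all_boot all_order all_algebra.
From mathcomp Require Import all_classical all_reals.
From mathcomp Require Import ereal esum.
Set Implicit Arguments. Unset Strict Implicit. Unset Printing Implicit Defensive.
Import Order.TTheory GRing.Theory Num.Theory.
Local Open Scope classical_set_scope.
Local Open Scope ring_scope.

Section WeightedGraphs.
Variables (R : realType) (X : countType).
Implicit Types (b : X -> X -> R) (m : X -> R).

Definition weighted_graph b m : Prop :=
  [/\ (forall x y, 0 <= b x y),
      (forall x y, b x y = b y x),
      (forall x, b x x = 0),
      (forall x, (\esum_(y in [set: X]) (b x y)%:E < +oo)%E) &
      (forall x, 0 < m x)].

Definition cond_B b m : Prop :=
  exists C : R, forall x,
    (((m x)^-1)%:E * (\esum_(y in [set: X]) (b x y)%:E) <= C%:E)%E.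

Definition cond_M m : Prop := exists C : R, forall x, m x <= C.

(* A path from x to y: the vertex sequence x :: s, with b > 0 between
   consecutive vertices, ending at y (s = [::] is the trivial path, x = y). *)
Definition is_path b (x : X) (s : seq X) (y : X) : Prop :=
  path (fun u v => 0 < b u v) x s /\ last x s = y.

Definition plen b (x : X) (s : seq X) : R :=
  \sum_(e <- zip (x :: s) s) (b e.1 e.2)^-1.

Definition path_in (x : X) (s : seq X) (V : set X) : Prop :=
  forall z, z \in x :: s -> V z.

Definition connected_graph b : Prop :=
  forall x y, exists s, is_path b x s y.

Definition gdist b (x y : X) : R :=
  inf [set plen b x s | s in [set s | is_path b x s y]].

Definition gball b (x : X) (r : R) : set X := [set y | gdist b x y <= r].

Definition Covr b (D : set X) : \bar R :=
  ereal_inf [set r%:E | r in [set r : R | 0 < r /\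
                 \bigcup_(p in D) gball b p r = [set: X]]].

Definition voronoi b (D : set X) (V : X -> set X) : Prop :=
  [/\ (forall p q, D p -> D q -> p <> q -> V p `&` V q = set0),
      (forall p, D p -> V p p /\
         forall x, V p x -> exists s, [/\ is_path b p s x, path_in p s (V p)
                                     & plen b p s = gdist b p x]),
      (forall p, D p -> forall x, V p x -> forall q, D q -> gdist b p x <= gdist b q x) &
      \bigcup_(p in D) V p = [set: X]].

End WeightedGraphs.

(* Under (B) and (M) the weights are bounded, b <= K, and since
   sum_y b(x,y) < oo every vertex has only finitely many neighbours y with
   b(x,y) >= 1/L.  A path of length <= L has at most L K edges, each of
   weight >= 1/L, so only finitely many such paths end at a given vertex:
   the infimum defining the distance from any set of starting points is a
   minimum.  In particular geodesics exist, d is a metric, and every vertex x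
   has nearest centers; let c(x) be the one with least code in the countable
   type X and V_p := c^-1(p).  If c(x) = p and z lies on a geodesic from p
   to x, then p is a nearest center of z and every nearest center of z is one
   of x, so the consistent tie-break forces c(z) = p: geodesics from p to V_p
   stay in V_p. *)

From HB Require Import structures.
From mathcomp Require Import all_boot all_order all_algebra.
From mathcomp Require Import all_classical all_reals.
From mathcomp Require Import finmap ereal esum lra.
Import Order.TTheory GRing.Theory Num.Theory.
Local Open Scope classical_set_scope.
Local Open Scope ring_scope.
Set Implicit Arguments. Unset Strict Implicit.

Lemma exists_argmin_seq (R : realDomainType) (T : choiceType) (l : seq T)
    (P : T -> Prop) (f : T -> R) : (exists2 a, a \in l & P a) ->
  exists a, [/\ a \in l, P a & forall c, c \in l -> P c -> f a <= f c].
Proof.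
move=> [a0 a0l Pa0].
case: (@arg_minP _ _ (seq_sub l) (SeqSub a0l)
  (fun i : seq_sub l => `[< P (val i) >]) (f \o val)).
  exact/asboolP.
move=> i /asboolP Pi imin; exists (val i); split => //; first exact: valP.
by move=> c cl Pc; apply: (imin (SeqSub cl)); apply/asboolP.
Qed.

Lemma size_mul_le_sum (R : numDomainType) (T : eqType) (s : seq T)
    (f : T -> R) e :
  (forall y, y \in s -> e <= f y) -> (size s)%:R * e <= \sum_(y <- s) f y.
Proof.
move=> hf.
have -> : (size s)%:R * e = \sum_(y <- s) e.
  by rewrite big_const_seq count_predT iter_addr addr0 mulr_natl.
by rewrite !big_seq; apply: ler_sum.
Qed.

Lemma exists_pickle_min (T : countType) (P : T -> Prop) : (exists x, P x) ->
  exists x, P x /\ forall y, P y -> (choice.pickle x <= choice.pickle y)%N.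
Proof.
move=> [x0 Px0].
have ex : exists n, `[< exists x, P x /\ choice.pickle x = n >].
  by exists (choice.pickle x0); apply/asboolP; exists x0.
have [n /asboolP[x [Px <-]] nmin] := find_ex_minn ex.
by exists x; split => // y Py; apply: nmin; apply/asboolP; exists y.
Qed.

Section PathLength.
Variables (R : realType) (X : countType) (b : X -> X -> R).

Lemma plen_nil x : plen b x [::] = 0.
Proof. by rewrite /plen big_nil. Qed.

Lemma plen_cons x y s : plen b x (y :: s) = (b x y)^-1 + plen b y s.
Proof. by rewrite /plen /= big_cons. Qed.

Lemma plen_cat x s1 s2 :
  plen b x (s1 ++ s2) = plen b x s1 + plen b (last x s1) s2.
Proof.
elim: s1 x => [|y s IH] x /=; first by rewrite plen_nil add0r.
by rewrite !plen_cons IH addrA.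
Qed.

Lemma plen_ge0 x s : path (fun u v => 0 < b u v) x s -> 0 <= plen b x s.
Proof.
elim: s x => [|y s IH] x /=; first by rewrite plen_nil.
by case/andP=> bxy ys; rewrite plen_cons addr_ge0 ?IH // invr_ge0 ltW.
Qed.

Lemma plen_gt0 x y s : path (fun u v => 0 < b u v) x (y :: s) ->
  0 < plen b x (y :: s).
Proof.
by case/andP=> bxy ys; rewrite plen_cons ltr_wpDr ?plen_ge0 // invr_gt0.
Qed.

Lemma is_path_cat x s1 y s2 z :
  is_path b x s1 y -> is_path b y s2 z -> is_path b x (s1 ++ s2) z.
Proof.
move=> [p1 l1] [p2 l2]; split; first by rewrite cat_path p1 l1.
by rewrite last_cat l1.
Qed.

Lemma is_path_split x s y z : is_path b x s y -> z \in x :: s ->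
  exists s1 s2, [/\ is_path b x s1 z, is_path b z s2 y
                  & plen b x s = plen b x s1 + plen b z s2].
Proof.
move=> [xs sy]; rewrite in_cons => /orP[/eqP->|zs].
  by exists [::], s; rewrite plen_nil add0r.
case/path.splitP: zs xs sy => s1 s2.
rewrite cat_path last_cat !last_rcons => /andP[xs1 zs2] s2y.
exists (rcons s1 z), s2; split => //; last by rewrite plen_cat last_rcons.
by split; rewrite ?last_rcons.
Qed.

Lemma size_le_plen_mul K x s : (forall u v, b u v <= K) ->
  path (fun u v => 0 < b u v) x s -> (size s)%:R <= plen b x s * K.
Proof.
move=> bK; elim: s x => [|y s IH] x /=; first by rewrite plen_nil mul0r.
case/andP=> bxy ys; rewrite plen_cons mulrDl -addn1 natrD addrC.
apply: lerD; last exact: IH.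
by rewrite -ler_pdivrMl ?invr_gt0 // invrK mulr1.
Qed.

Lemma path_heavy_of_plen_le L x s : 0 < L ->
  path (fun u v => 0 < b u v) x s -> plen b x s <= L ->
  path (fun u v => L^-1 <= b u v) x s.
Proof.
move=> L0; elim: s x => [|y s IH] x //=.
case/andP=> bxy ys; rewrite plen_cons => hle.
have ys0 := plen_ge0 ys.
rewrite IH // ?andbT; last by apply: le_trans hle; rewrite lerDr invr_ge0 ltW.
rewrite -(invrK (b x y)) lef_pV2 ?posrE ?invr_gt0 //.
by apply: le_trans hle; rewrite lerDl.
Qed.

Lemma gdist_le_plen x s y : is_path b x s y -> gdist b x y <= plen b x s.
Proof.
move=> xsy; apply: ge_inf; last by exists s.
by exists 0 => _ [t xty <-]; exact: plen_ge0 xty.1.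
Qed.

Lemma le_gdist x y c : (exists s, is_path b x s y) ->
  (forall s, is_path b x s y -> c <= plen b x s) -> c <= gdist b x y.
Proof.
move=> [s xsy] hc; apply: lb_le_inf; first by exists (plen b x s), s.
by move=> _ [t xty <-]; exact: hc.
Qed.

End PathLength.

Section WeightBounds.
Variables (R : realType) (X : countType) (b : X -> X -> R).

Lemma edge_weight_bounded m : weighted_graph b m -> cond_B b m -> cond_M m ->
  exists2 K, 0 < K & forall x y, b x y <= K.
Proof.
move=> [b0 _ _ _ m0] [C HC] [C' HC'].
exists (`|C| * `|C'| + 1); first by rewrite ltr_wpDl ?mulr_ge0.
move=> x y.
have bxy_le_sum : ((b x y)%:E <= \esum_(z in [set: X]) (b x z)%:E)%E.
  by apply: esum_ge; exists [set y]; [split|rewrite fsbig_set1].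
have : (((m x)^-1 * b x y)%:E <= C%:E)%E.
  apply: le_trans (HC x).
  by rewrite EFinM lee_pmul // lee_fin ?b0 ?invr_ge0 // ltW.
rewrite lee_fin mulrC ler_pdivrMr // => bxy_le_Cm.
have := m0 x; have := HC' x; have := ler_norm C; have := ler_norm C'.
have := b0 x y; have := normr_ge0 C.
nra.
Qed.

Hypothesis b0 : forall x y, 0 <= b x y.

Lemma finite_heavy_neighbours x e : 0 < e ->
  (\esum_(y in [set: X]) (b x y)%:E < +oo)%E -> finite_set [set y | e <= b x y].
Proof.
move=> e0 sum_fin; apply: contrapT => /infinite_set_fset heavy.
set S := (\esum_(y in [set: X]) (b x y)%:E)%E in sum_fin.
have S0 : (0 <= S)%E by apply: esum_ge0 => y _; rewrite lee_fin.
have SE : S = (fine S)%:E by rewrite fineK // ge0_fin_numE.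
pose n := (Num.truncn (fine S / e)).+1.
have [B Bheavy Bn] := heavy n.
suff : ((n%:R * e)%:E <= S)%E.
  by rewrite SE lee_fin -ler_pdivlMr // leNgt truncnS_gt.
apply: esum_ge; exists [set` B]; first by split.
rewrite fsbig_finite // set_fsetK sumEFin lee_fin.
apply: le_trans (size_mul_le_sum Bheavy).
by rewrite ler_wpM2r ?ler_nat // ltW.
Qed.

End WeightBounds.

(* [(q, s)] stands for the path [q :: s]; paths are grown backwards from [x]
   by prepending a neighbour of their first vertex. *)
Fixpoint paths_to (X : Type) (nbrs : X -> seq X) (n : nat) (x : X) :
    seq (X * seq X) :=
  if n is n'.+1 then
    (x, [::]) :: [seq (q, t.1 :: t.2) | t <- paths_to nbrs n' x, q <- nbrs t.1]
  else [:: (x, [::])].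

Section ShortestPaths.
Variables (R : realType) (X : countType) (b : X -> X -> R).
Hypothesis b0 : forall x y, 0 <= b x y.
Hypothesis bC : forall x y, b x y = b y x.
Hypothesis sum_fin : forall x, (\esum_(y in [set: X]) (b x y)%:E < +oo)%E.
Variable K : R.
Hypothesis K0 : 0 < K.
Hypothesis bK : forall x y, b x y <= K.

Lemma mem_paths_to e nbrs n q s x :
  (forall y z, e <= b y z -> z \in nbrs y) -> (size s <= n)%N ->
  path (fun u v => e <= b u v) q s -> last q s = x ->
  (q, s) \in paths_to nbrs n x.
Proof.
move=> heavy_nbrs; elim: n q s => [|n IH] q [|y s] //=.
- by move=> _ _ ->; rewrite mem_seq1.
- by move=> _ _ ->; rewrite mem_head.
move=> sn /andP[qy ys] sx; rewrite in_cons; apply/orP; right.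
apply/allpairsPdep; exists (y, s), q; split => //; first exact: IH.
by apply: heavy_nbrs; rewrite bC.
Qed.

Lemma short_paths_finite x L : 0 < L -> exists l : seq (X * seq X),
  forall q s, is_path b q s x -> plen b q s <= L -> (q, s) \in l.
Proof.
move=> L0.
have [nbrs heavy_nbrs] : exists nbrs : X -> seq X,
    forall y z, L^-1 <= b y z -> z \in nbrs y.
  have /choice[nbrs nbrsE] : forall y, exists s : seq X,
      [set z | L^-1 <= b y z] = [set` s].
    by move=> y; apply/finite_seqP/finite_heavy_neighbours; rewrite ?invr_gt0.
  exists nbrs => y z yz.
  by have : [set z | L^-1 <= b y z] z by []; rewrite nbrsE.
exists (paths_to nbrs (Num.truncn (L * K)) x) => q s [qs sx] qsL.
apply: mem_paths_to heavy_nbrs _ (path_heavy_of_plen_le L0 qs qsL) sx.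
rewrite truncn_ge_nat; last by rewrite mulr_ge0 ?ltW.
by apply: le_trans (size_le_plen_mul bK qs) (ler_wpM2r (ltW K0) qsL).
Qed.

Lemma shortest_path_from (S : set X) q0 s0 x : S q0 -> is_path b q0 s0 x ->
  exists q s, [/\ S q, is_path b q s x &
    forall q' s', S q' -> is_path b q' s' x -> plen b q s <= plen b q' s'].
Proof.
move=> Sq0 q0s0x; pose L := plen b q0 s0 + 1.
have L0 : 0 < L by rewrite ltr_wpDl // plen_ge0 // q0s0x.1.
have q0s0L : plen b q0 s0 <= L by rewrite lerDl.
have [l short_in_l] := short_paths_finite x L0.
pose P t := [/\ S t.1, is_path b t.1 t.2 x & plen b t.1 t.2 <= L].
have P_in_l : exists2 t, t \in l & P t.
  by exists (q0, s0); [exact: short_in_l | split].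
have [[q s] [_ [Sq qsx qsL] qs_min]] :=
  exists_argmin_seq (fun t => plen b t.1 t.2) P_in_l.
exists q, s; split => // q' s' Sq' q's'x.
have [q's'L|/ltW] := leP (plen b q' s') L; last exact: le_trans.
by apply: (qs_min (q', s')); [exact: short_in_l | split].
Qed.

Hypothesis Hc : connected_graph b.

Lemma geodesic_exists x y :
  exists2 s, is_path b x s y & plen b x s = gdist b x y.
Proof.
have [s0 xs0y] := Hc x y.
have [_ [s [/= -> xsy s_min]]] := shortest_path_from (S := [set x]) erefl xs0y.
exists s => //; apply/eqP; rewrite eq_le gdist_le_plen // andbT.
by apply: le_gdist => [|t xty]; [exists s | exact: s_min].
Qed.

Lemma gdist_ge0 x y : 0 <= gdist b x y.
Proof. by apply: le_gdist => [|s xsy]; [exact: Hc | exact: plen_ge0 xsy.1]. Qed.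

Lemma gdist_triangle x y z : gdist b x z <= gdist b x y + gdist b y z.
Proof.
have [s1 xs1y <-] := geodesic_exists x y.
have [s2 ys2z <-] := geodesic_exists y z.
by have := gdist_le_plen (is_path_cat xs1y ys2z); rewrite plen_cat xs1y.2.
Qed.

Lemma gdist_xx x : gdist b x x = 0.
Proof.
apply/eqP; rewrite eq_le gdist_ge0 andbT -(plen_nil b x).
by apply: gdist_le_plen; split.
Qed.

Lemma gdist_eq0 x y : gdist b x y = 0 -> x = y.
Proof.
have [[|z s] xsy <-] := geodesic_exists x y; first by move=> _; exact: xsy.2.
by move=> xsy0; have := plen_gt0 xsy.1; rewrite xsy0 ltxx.
Qed.

Lemma gdist_geodesic_split x s y z :
  is_path b x s y -> plen b x s = gdist b x y -> z \in x :: s ->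
  gdist b x z + gdist b z y <= gdist b x y.
Proof.
move=> xsy geo zs; have [s1 [s2 [xs1z zs2y plenE]]] := is_path_split xsy zs.
by rewrite -geo plenE lerD // gdist_le_plen.
Qed.

Definition nearest_center (D : set X) x q :=
  D q /\ forall q', D q' -> gdist b q x <= gdist b q' x.

Lemma nearest_center_exists D x : D !=set0 -> exists q, nearest_center D x q.
Proof.
move=> [q0 Dq0]; have [s0 q0s0x] := Hc q0 x.
have [q [s [Dq qsx s_min]]] := shortest_path_from Dq0 q0s0x.
exists q; split => // q' Dq'; apply: le_trans (gdist_le_plen qsx) _.
by apply: le_gdist => [|t q'tx]; [exact: Hc | exact: s_min].
Qed.

Lemma nearest_center_geodesic D p z x : nearest_center D x p ->
  gdist b p z + gdist b z x <= gdist b p x ->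
  nearest_center D z p /\
  forall q, nearest_center D z q -> nearest_center D x q.
Proof.
move=> [Dp p_near] pzx; split.
  split=> // q' Dq'; have := gdist_triangle q' z x; have := p_near q' Dq'; lra.
move=> q [Dq q_near]; split=> // q' Dq'.
have := gdist_triangle q z x; have := q_near p Dp; have := p_near q' Dq'; lra.
Qed.

Lemma voronoi_exists D : D !=set0 -> exists V, voronoi b D V.
Proof.
move=> D0.
have /choice[c c_min] : forall x, exists c, nearest_center D x c /\
    forall q, nearest_center D x q -> (choice.pickle c <= choice.pickle q)%N.
  by move=> x; apply: exists_pickle_min; exact: nearest_center_exists.
have c_near x : nearest_center D x (c x) by have [] := c_min x.
have c_eq x q : nearest_center D x q ->
    (choice.pickle q <= choice.pickle (c x))%N -> c x = q.
  move=> xq qcx; apply: (pcan_inj (@choice.pickleK X)); apply/eqP.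
  by rewrite eqn_leq qcx (c_min x).2.
exists (fun p => [set x | c x = p]); split.
- move=> p q _ _ pq; apply/seteqP; split=> x // [/= cxp cxq].
  by apply: pq; rewrite -cxp -cxq.
- move=> p Dp; split.
    apply: gdist_eq0; apply/eqP; rewrite eq_le gdist_ge0 andbT -(gdist_xx p).
    exact: (c_near p).2.
  move=> x /= cxp; have [s psx geo] := geodesic_exists p x.
  have p_near_x : nearest_center D x p by rewrite -cxp.
  exists s; split => // z zs /=.
  have [p_near_z near_z_near_x] :=
    nearest_center_geodesic p_near_x (gdist_geodesic_split psx geo zs).
apply: (c_eq z p p_near_z); rewrite -{1}cxp.
  exact: (c_min x).2 _ (near_z_near_x _ (c_near z)).
- by move=> p Dp x /= <- q Dq; exact: (c_near x).2.
- by apply/seteqP; split=> x // _; exists (c x); [exact: (c_near x).1 |].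
Qed.

End ShortestPaths.

Lemma voronoi_sub_gball (R : realType) (X : countType) (b : X -> X -> R)
    (D : set X) (V : X -> set X) :
  (Covr b D < +oo)%E -> voronoi b D V ->
  forall p, D p -> V p `<=` gball b p (fine (Covr b D)).
Proof.
move=> Cfin [_ _ V_nearest _] p Dp x Vpx.
have C0 : (0 <= Covr b D)%E.
  by apply: le_ereal_inf_tmp => _ [r [r0 _] <-]; rewrite lee_fin ltW.
rewrite /gball /= -lee_fin fineK ?ge0_fin_numE //.
apply: le_ereal_inf_tmp => _ [r [r0 cover] <-]; rewrite lee_fin.
have : [set: X] x by [].
rewrite -cover => -[q Dq xq].
exact: le_trans (V_nearest p Dp x Vpx q Dq) xq.
Qed.

Theorem proposition3p8 (R : realType) (X : countType) (b : X -> X -> R) (m : X -> R)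
    (Hg : weighted_graph b m) (Hc : connected_graph b) (HB : cond_B b m) (HM : cond_M m)
    (D : set X) (HD : D !=set0) :
  (exists V : X -> set X, voronoi b D V) /\
  ((Covr b D < +oo)%E ->
   forall V : X -> set X, voronoi b D V ->
   forall p, D p -> V p `<=` gball b p (fine (Covr b D))).
Proof.
have [K K0 bK] := edge_weight_bounded Hg HB HM.
have [b0 bC _ sum_fin _] := Hg.
split; first exact (voronoi_exists b0 bC sum_fin K0 bK Hc HD).
by move=> Cfin V HV; exact: voronoi_sub_gball.
Qed.
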